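(* Let $\mathcal{F}$ be a family of subsets of a finite set $E$ and $K\in\mathcal{F}$. Then $\mathcal{L}(M(\mathcal{F}-\{K\}))\subseteq\mathcal{L}(M(\mathcal{F}))$, i.e. every closed set of the transversal matroid $M(\mathcal{F}-\{K\})$ is a closed set of the transversal matroid $M(\mathcal{F})$.
   Context: For a family $\mathcal{F}$ of subsets of $E$, the transversal matroid $M(\mathcal{F})$ is the matroid on $E$ whose independent sets are the partial transversals of $\mathcal{F}$: sets $\{e_1,\dots,e_k\}$ of distinct elements with $e_j\in F_j$ for pairwise distinct members $F_1,\dots,F_k$ of $\mathcal{F}$. For a matroid $M$ with rank $r_M$, $cl_M(X)=\{a:r_M(X\cup\{a\})=r_M(X)\}$, and $\mathcal{L}(M)$ is the set of closed sets ($cl_M(X)=X$). $\mathcal{F}-\{K\}$ is the family obtained by removing the member $K$. *)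

From mathcomp Require Import all_boot.
Set Implicit Arguments. Unset Strict Implicit. Unset Printing Implicit Defensive.

(* A family of subsets of the finite ground set E is an indexed family
   F : I -> {set E} over a finite index type I (repetitions allowed).
   A subfamily is given by a set J : {set I} of indices kept;
   F - {K} corresponds to J = [set: I] :\ K. *)

Definition ptrans (E I : finType) (F : I -> {set E}) (J : {set I}) (X : {set E}) : bool :=
  [exists f : {ffun E -> I},
     [forall x in X, (f x \in J) && (x \in F (f x))] &&
     [forall x in X, forall y in X, (f x == f y) ==> (x == y)]].

Definition trank (E I : finType) (F : I -> {set E}) (J : {set I}) (X : {set E}) : nat :=
  \max_(Y : {set E} | (Y \subset X) && ptrans F J Y) #|Y|.

Definition tcl (E I : finType) (F : I -> {set E}) (J : {set I}) (X : {set E}) : {set E} :=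
  [set a | trank F J (a |: X) == trank F J X].

Definition tclosed (E I : finType) (F : I -> {set E}) (J : {set I}) (X : {set E}) : bool :=
  tcl F J X == X.

From mathcomp Require Import all_boot zify.
Set Implicit Arguments. Unset Strict Implicit. Unset Printing Implicit Defensive.

(* The defect r_F(X) - r_{F-K}(X) is 0 or 1, and it is monotone in X: if
   every maximum partial transversal of X must use K, an augmenting path
   argument shows that the same holds for any larger set.  Hence every rank
   increment of M(F-K) is one of M(F), i.e. M(F-K) is a quotient of M(F), and
   so its flats are flats of M(F). *)

Section TransversalMatroid.
Variables (E I : finType) (F : I -> {set E}).

Lemma ptransP (J : {set I}) (Y : {set E}) :
  reflect (exists f : E -> I,
             {in Y, forall x, f x \in J /\ x \in F (f x)} /\ {in Y &, injective f})
          (ptrans F J Y).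
Proof.
apply: (iffP existsP) => [[f /andP[/forall_inP fJF /forall_inP finj]] | [f [fJF finj]]].
  exists f; split=> [x /fJF/andP[] // | x y xY yY fxy].
  by have /forall_inP/(_ y yY) := finj x xY; rewrite fxy eqxx => /eqP.
exists (finfun f); apply/andP; split; apply/forall_inP => x xY; rewrite !ffunE.
  by have [-> ->] := fJF x xY.
by apply/forall_inP => y yY; rewrite ffunE; apply/implyP => /eqP/finj ->.
Qed.

Lemma ptrans_sub (J J' : {set I}) (Y Y' : {set E}) :
  J \subset J' -> Y' \subset Y -> ptrans F J Y -> ptrans F J' Y'.
Proof.
move=> sJ sY /ptransP[f [fJF finj]]; apply/ptransP; exists f; split.
  by move=> x /(subsetP sY)/fJF[/(subsetP sJ)].
by move=> x y /(subsetP sY) xY /(subsetP sY) yY; apply: finj.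
Qed.

Lemma ptrans_setU1 (J : {set I}) (Y : {set E}) i a :
  ptrans F J Y -> i \notin J -> a \in F i -> ptrans F (i |: J) (a |: Y).
Proof.
move=> /ptransP[f [fJF finj]] iJ aFi; apply/ptransP.
exists (fun x => if x == a then i else f x); split.
  move=> x; case: eqP => [-> _ | _ /setU1P[// | /fJF[fxJ ->]]].
    by rewrite setU11.
  by rewrite setU1r.
have fY x : x \in Y -> f x != i by move/fJF => [fxJ _]; apply: contraNneq iJ => <-.
move=> x y /setU1P[-> | xY] /setU1P[-> | yY]; rewrite ?eqxx //.
- by case: eqP => [-> // | _ /esym/eqP]; rewrite (negPf (fY y yY)).
- by case: eqP => [-> // | _ /eqP]; rewrite (negPf (fY x xY)).
- case: (x =P a) => [-> | _]; case: (y =P a) => [-> // | _]; last exact: finj.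
  + by move=> /esym/eqP; rewrite (negPf (fY y yY)).
  + by move=> /eqP; rewrite (negPf (fY x xY)).
Qed.

Lemma ptrans_setD1 (J : {set I}) (Y : {set E}) y :
  ptrans F J Y -> y \in Y -> exists2 i, i \in J & y \in F i /\ ptrans F (J :\ i) (Y :\ y).
Proof.
move=> /ptransP[f [fJF finj]] yY; have [fyJ yF] := fJF y yY.
exists (f y) => //; split=> //; apply/ptransP; exists f; split.
  move=> x /setD1P[xy xY]; have [fxJ xF] := fJF x xY; split=> //.
  by rewrite in_setD1 fxJ andbT; apply: contra xy => /eqP/finj-> .
by move=> x z /setD1P[_ xY] /setD1P[_ zY]; apply: finj.
Qed.

Lemma ptrans_setU1_index (J : {set I}) (Y : {set E}) i :
  ptrans F (i |: J) Y ->
  ptrans F J Y \/ exists2 y, y \in Y & y \in F i /\ ptrans F J (Y :\ y).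
Proof.
move=> /ptransP[f [fJF finj]].
have fJ x : x \in Y -> f x != i -> f x \in J.
  by move=> /fJF[/setU1P[-> _ /eqP // | //]].
have [/existsP[y /andP[yY /eqP fyi]] | noi] := boolP [exists y, (y \in Y) && (f y == i)].
  right; exists y => //; have [_ yF] := fJF y yY; split; first by rewrite -fyi.
  apply/ptransP; exists f; split; last by move=> x z /setD1P[_ xY] /setD1P[_ zY]; apply: finj.
  move=> x /setD1P[xy xY]; split; last by have [] := fJF x xY.
  by apply: fJ => //; apply: contra xy => /eqP fxi; apply/eqP/finj; rewrite ?fxi.
left; apply/ptransP; exists f; split=> // x xY; split; last by have [] := fJF x xY.
by apply: fJ => //; apply: contra noi => fxi; apply/existsP; exists x; rewrite xY.
Qed.

Lemma ptrans_augment (J : {set I}) (Y Z : {set E}) K :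
  ptrans F (K |: J) Y -> ptrans F J Z ->
  ptrans F J Y \/ exists2 e, e \in Y :\: Z & ptrans F (K |: J) (e |: Z).
Proof.
have [n ltYn] := ubnP #|Y|; elim: n => // n IH in J Y Z K ltYn *.
move=> pY pZ; have [KJ | KnJ] := boolP (K \in J).
  by left; move: pY; rewrite (setUidPr _) // sub1set.
have [pYJ | [y0 y0Y [y0K pY']]] := ptrans_setU1_index pY; first by left.
have [y0Z | y0nZ] := boolP (y0 \in Z); last first.
  by right; exists y0; [rewrite inE y0nZ | exact: ptrans_setU1].
(* y0 is rematched to its partner i in Z, and the path continues from i *)
have [i iJ [y0i pZ']] := ptrans_setD1 pZ y0Z.
have iJi : i \notin J :\ i by rewrite setD11.
have ltY' : #|Y :\ y0| < n by move: ltYn; rewrite (cardsD1 y0 Y) y0Y.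
have pY'i : ptrans F (i |: (J :\ i)) (Y :\ y0) by rewrite setD1K.
have [pYi | [e /setDP[/setD1P[ey0 eY] eZ'] pe]] := IH _ _ _ _ ltY' pY'i pZ'.
  by left; rewrite -(setD1K y0Y) -(setD1K iJ); apply: ptrans_setU1.
right; exists e; first by rewrite inE eY andbT; apply: contra eZ' => eZ; rewrite in_setD1 ey0.
rewrite -(setD1K y0Z) setUCA; apply: ptrans_setU1 => //.
by rewrite setD1K in pe.
Qed.

Lemma ptrans0 (J : {set I}) (i0 : I) : ptrans F J set0.
Proof. by apply/ptransP; exists (fun=> i0); split=> x; rewrite inE. Qed.

Lemma trank_ge (J : {set I}) (X Y : {set E}) :
  Y \subset X -> ptrans F J Y -> #|Y| <= trank F J X.
Proof. by move=> sYX pY; apply: (leq_bigmax_cond (I := {set E}) Y); rewrite sYX. Qed.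

(* i0 is needed: if I is empty and E is not, not even set0 is a partial transversal. *)
Lemma trank_witness (J : {set I}) (X : {set E}) (i0 : I) :
  exists2 Y : {set E}, (Y \subset X) && ptrans F J Y & #|Y| = trank F J X.
Proof.
pose A := [pred Y : {set E} | (Y \subset X) && ptrans F J Y].
have A0 : 0 < #|A| by apply/card_gt0P; exists set0; rewrite inE sub0set ptrans0.
have [Y AY maxY] := eq_bigmax_cond (fun Y : {set E} => #|Y|) A0.
by exists Y => //; rewrite -maxY; apply: eq_bigl.
Qed.

Lemma trank_mono (J J' : {set I}) (X X' : {set E}) :
  J \subset J' -> X \subset X' -> trank F J X <= trank F J' X'.
Proof.
move=> sJ sX; apply/bigmax_leqP => Y /andP[sYX pY].
by apply: trank_ge; [exact: subset_trans sX | exact: ptrans_sub pY].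
Qed.

Lemma trank_setU1_index (J : {set I}) (X : {set E}) K :
  trank F (K |: J) X <= (trank F J X).+1.
Proof.
apply/bigmax_leqP => Y /andP[sYX pY].
have [pYJ | [y yY [_ pY']]] := ptrans_setU1_index pY.
  by rewrite ltnW // ltnS trank_ge.
rewrite (cardsD1 y Y) yY add1n ltnS trank_ge //.
exact: subset_trans (subD1set _ _) sYX.
Qed.

Lemma trank_defect_mono (J : {set I}) (X X' : {set E}) K :
  X \subset X' -> trank F J X < trank F (K |: J) X ->
  trank F J X' < trank F (K |: J) X'.
Proof.
move=> sXX' ltX.
have [Y /andP[sYX pY] cardY] := trank_witness (K |: J) X K.
have [Z /andP[sZX' pZ] cardZ] := trank_witness J X' K.
have [pYJ | [e /setDP[eY eZ] pe]] := ptrans_augment pY pZ.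
  by move: ltX; rewrite -cardY ltnNge trank_ge.
rewrite -cardZ (leq_trans _ (trank_ge _ pe)) ?cardsU1 ?eZ //.
by rewrite subUset sZX' sub1set (subsetP sXX') ?(subsetP sYX).
Qed.

Lemma trank_quotient (J : {set I}) (X X' : {set E}) K :
  X \subset X' ->
  trank F J X' + trank F (K |: J) X <= trank F J X + trank F (K |: J) X'.
Proof.
move=> sXX'; have [ltX | geX] := ltnP (trank F J X) (trank F (K |: J) X).
  have := trank_defect_mono sXX' ltX; have := trank_setU1_index J X K; lia.
have := trank_mono (subsetUr [set K] J) (subxx X'); lia.
Qed.

Lemma subset_tcl (J : {set I}) (X : {set E}) : X \subset tcl F J X.
Proof. by apply/subsetP=> a aX; rewrite inE (setUidPr _) ?sub1set. Qed.

Lemma tcl_setU1_index (J : {set I}) (X : {set E}) K :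
  tcl F (K |: J) X \subset tcl F J X.
Proof.
apply/subsetP=> a; rewrite !inE => /eqP eqKJ; rewrite eqn_leq.
rewrite (trank_mono (subxx J) (subsetUr [set a] X)) andbT.
have := trank_quotient J K (subsetUr [set a] X); rewrite eqKJ; lia.
Qed.

Lemma tclosed_setU1_index (J : {set I}) (X : {set E}) K :
  tclosed F J X -> tclosed F (K |: J) X.
Proof.
move=> /eqP clX; rewrite /tclosed eqEsubset subset_tcl andbT.
by rewrite -{2}clX tcl_setU1_index.
Qed.

End TransversalMatroid.

Theorem theorem15 (E I : finType) (F : I -> {set E}) (K : I) (X : {set E}) :
  tclosed F ([set: I] :\ K) X -> tclosed F [set: I] X.
Proof. by rewrite -{2}(setD1K (in_setT K)); apply: tclosed_setU1_index. Qed.
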